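(* Let $N$ be a positive integer and $K$ a compact Hausdorff space. Then $\ell_\infty^N$ can be U-embedded into $C(K)$ if and only if $K$ contains at least $N$ distinct $G_\delta$-points (points $p$ such that $\{p\}$ is a $G_\delta$-subset of $K$).
   Context: $\ell_\infty^N$ is $\mathbb R^N$ with the max norm; $C(K)$ carries the sup norm. A linear isometry $T\colon X\to Y$ is a U-embedding if every $x^*\in X^*$ has a unique $y^*\in Y^*$ with $T^*(y^* )=x^*$ and $\|y^*\|=\|x^*\|$. *)

From HB Require Import structures.
From mathcomp Require Import all_boot all_order all_algebra.
From mathcomp Require Import all_classical all_reals all_analysis.
Set Implicit Arguments. Unset Strict Implicit. Unset Printing Implicit Defensive.
Import Order.TTheory GRing.Theory Num.Theory.
Import numFieldNormedType.Exports.
Local Open Scope classical_set_scope.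
Local Open Scope ring_scope.

Definition linf_norm {R : realType} {N : nat} (x : 'I_N -> R) : R :=
  \big[Num.max/0]_(i < N) `|x i|.

Definition sup_norm {R : realType} {K : topologicalType} (f : K -> R) : R :=
  sup [set `|f k| | k in [set: K]].

(* linear functionals on ell_infty^N (all are bounded) and their dual norm *)
Definition lin_fun_linf {R : realType} {N : nat} (xs : ('I_N -> R) -> R) : Prop :=
  forall (a : R) (x y : 'I_N -> R), xs (fun i => a * x i + y i) = a * xs x + xs y.

Definition dual_norm_linf {R : realType} {N : nat} (xs : ('I_N -> R) -> R) : R :=
  sup [set `|xs x| | x in [set x | linf_norm x <= 1]].

(* elements of C(K)^* : bounded linear functionals on the continuous functions
   (values of phi off C(K) are irrelevant) *)
Definition CK_dual {R : realType} {K : topologicalType} (phi : (K -> R) -> R) : Prop :=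
  (forall (a : R) (f g : K -> R), continuous f -> continuous g ->
     phi (fun k => a * f k + g k) = a * phi f + phi g) /\
  exists M : R, forall f : K -> R, continuous f -> `|phi f| <= M * sup_norm f.

Definition CK_dual_norm {R : realType} {K : topologicalType} (phi : (K -> R) -> R) : R :=
  sup [set `|phi f| | f in [set f : K -> R | continuous f /\ sup_norm f <= 1]].

Definition lin_isometry {R : realType} {N : nat} {K : topologicalType}
  (T : ('I_N -> R) -> (K -> R)) : Prop :=
  (forall x, continuous (T x)) /\
  (forall (a : R) (x y : 'I_N -> R), T (fun i => a * x i + y i) = (fun k => a * T x k + T y k)) /\
  (forall x, sup_norm (T x) = linf_norm x).

Definition U_embedding {R : realType} {N : nat} {K : topologicalType}
  (T : ('I_N -> R) -> (K -> R)) : Prop :=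
  lin_isometry T /\
  forall xs : ('I_N -> R) -> R, lin_fun_linf xs ->
    (exists phi, CK_dual phi /\ (forall x, phi (T x) = xs x) /\
                 CK_dual_norm phi = dual_norm_linf xs) /\
    (forall phi1 phi2, CK_dual phi1 -> CK_dual phi2 ->
       (forall x, phi1 (T x) = xs x) -> CK_dual_norm phi1 = dual_norm_linf xs ->
       (forall x, phi2 (T x) = xs x) -> CK_dual_norm phi2 = dual_norm_linf xs ->
       forall f : K -> R, continuous f -> phi1 f = phi2 f).

Definition Gdelta_point {K : topologicalType} (p : K) : Prop :=
  exists U : nat -> set K, (forall n, open (U n)) /\ \bigcap_n U n = [set p].

From HB Require Import structures.
From mathcomp Require Import all_boot all_order all_algebra.
From mathcomp Require Import all_classical all_reals all_analysis.
From mathcomp Require Import ring lra.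
Import Order.TTheory GRing.Theory Num.Theory.
Import numFieldNormedType.Exports.
Local Open Scope classical_set_scope.
Local Open Scope ring_scope.

(* Necessity.  Let T be a U-embedding and g_i := T e_i.  Testing the isometry on e_i +- e_j
   shows that all g_j, j <> i, vanish where |g_i| = 1.  For every point k with |g_i k| = 1 the
   functional f |-> g_i(k) f(k) is a norm-preserving extension of the i-th coordinate
   functional; by uniqueness of that extension |g_i| peaks at a single point p_i.  Then {p_i}
   is the intersection of the open sets [1 - 1/(n+1) < |g_i|], and the p_i are distinct.

   Sufficiency.  A G_delta point p_i of a compact Hausdorff space carries a peak function f_i
   (a dyadic series of Urysohn functions) with f_i^-1(1) = {p_i}; taking the f_i supported in
   disjoint neighbourhoods, T x := sum_i x_i f_i is an isometry, and x^* extends by evaluation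
   at the p_i.  Any norm-preserving extension phi attains its norm at h := T s, where s_i is
   the sign of x^*(e_i), and |h| < 1 off {p_i}.  Such a phi kills every function dominated by
   a multiple of 1 - |h|, hence, by soft thresholding and compactness, every function
   vanishing at the p_i; so phi is the evaluation extension. *)

Lemma sup_eq_max {R : realType} (A : set R) a : A a -> ubound A a -> sup A = a.
Proof.
move=> Aa ubA; apply/le_anti/andP; split; first by apply: ge_sup => //; exists a.
by apply: sup_upper_bound => //; split; exists a.
Qed.

Section LinftyN.
Context {R : realType} {N : nat}.
Implicit Types (x : 'I_N -> R) (xs : ('I_N -> R) -> R).

Definition unit_vec (i : 'I_N) : 'I_N -> R := fun j => (j == i)%:R.

Lemma lin_fun_linf0 xs : lin_fun_linf xs -> xs (fun=> 0) = 0.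
Proof.
move=> linxs; have := linxs 1 (fun=> 0) (fun=> 0).
have -> : (fun _ : 'I_N => 1 * 0 + 0) = fun=> 0 :> R by apply/funext => i; rewrite mulr0 addr0.
lra.
Qed.

Lemma lin_fun_linf_expand xs x : lin_fun_linf xs ->
  xs x = \sum_i x i * xs (unit_vec i).
Proof.
move=> linxs.
have sumE (s : seq 'I_N) : xs (fun j => \sum_(i <- s) x i * unit_vec i j) =
    \sum_(i <- s) x i * xs (unit_vec i).
  elim: s => [|i s IH].
    by rewrite big_nil; under eq_fun do rewrite big_nil; exact: lin_fun_linf0.
  by rewrite big_cons -IH -linxs; congr xs; apply/funext => j; rewrite big_cons.
rewrite -sumE; congr xs; apply/funext => j.
rewrite (bigD1 j) //= big1 => [|i ij]; first by rewrite /unit_vec eqxx mulr1 addr0.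
by rewrite /unit_vec eq_sym (negbTE ij) mulr0.
Qed.

Lemma linf_norm_ge x i : `|x i| <= linf_norm x.
Proof. exact: le_bigmax. Qed.

Lemma linf_norm_le x c : 0 <= c -> (forall i, `|x i| <= c) -> linf_norm x <= c.
Proof. by move=> c0 xc; apply: bigmax_le. Qed.

Lemma linf_norm_ge0 x : 0 <= linf_norm x.
Proof. exact: bigmax_ge_id. Qed.

Lemma linf_norm_unit_vec i : linf_norm (unit_vec i) = 1.
Proof.
apply/le_anti; rewrite linf_norm_le //=; last first.
  by move=> j; rewrite /unit_vec; case: (j == i); rewrite ?normr1 ?normr0.
by have := linf_norm_ge (unit_vec i) i; rewrite /unit_vec eqxx normr1.
Qed.

Definition sign_vec xs : 'I_N -> R := fun i => Num.sg (xs (unit_vec i)).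

Lemma linf_norm_sign_vec xs : linf_norm (sign_vec xs) <= 1.
Proof. by apply: linf_norm_le => // i; rewrite normr_sg; case: (_ != 0). Qed.

Lemma lin_fun_linf_sign_vec xs : lin_fun_linf xs ->
  xs (sign_vec xs) = \sum_i `|xs (unit_vec i)|.
Proof.
by move=> linxs; rewrite (lin_fun_linf_expand _ _ linxs); apply: eq_bigr => i _; rewrite -normrEsg.
Qed.

Lemma lin_fun_linf_le xs x : lin_fun_linf xs ->
  `|xs x| <= (\sum_i `|xs (unit_vec i)|) * linf_norm x.
Proof.
move=> linxs; rewrite (lin_fun_linf_expand _ _ linxs) mulr_suml.
apply: le_trans (ler_norm_sum _ _ _) _; apply: ler_sum => i _.
by rewrite normrM mulrC ler_wpM2l ?linf_norm_ge.
Qed.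

Lemma dual_norm_linfE xs : lin_fun_linf xs ->
  dual_norm_linf xs = \sum_i `|xs (unit_vec i)|.
Proof.
move=> linxs; apply: sup_eq_max.
  exists (sign_vec xs); first exact: linf_norm_sign_vec.
  by rewrite lin_fun_linf_sign_vec // ger0_norm // sumr_ge0.
move=> _ [x x1 <-]; apply: le_trans (lin_fun_linf_le _ _ linxs) _.
by rewrite -[leRHS]mulr1 ler_wpM2l // sumr_ge0.
Qed.

End LinftyN.

Section Continuity.
Context {R : realType} {K : topologicalType}.
Implicit Types (f g : K -> R) (a : R).

Lemma continuous_norm f : continuous f -> continuous (fun k => `|f k|).
Proof. by move=> cf k; apply: continuous_comp; [exact: cf | exact: norm_continuous]. Qed.

Lemma continuous_comb a f g : continuous f -> continuous g ->
  continuous (fun k => a * f k + g k).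
Proof.
move=> cf cg k.
have af : {for k, continuous (fun k => a * f k)}.
  exact: (@continuousM R K (fun=> a) f k (@cst_continuous K R a k) (cf k)).
exact: (@continuousD R R^o K _ g k af (cg k)).
Qed.

Lemma continuous_add f g : continuous f -> continuous g -> continuous (fun k => f k + g k).
Proof. by move=> cf cg; have := continuous_comb 1 f g cf cg; under eq_fun do rewrite mul1r. Qed.

Lemma continuous_scale a f : continuous f -> continuous (fun k => a * f k).
Proof.
move=> cf; have := continuous_comb a f _ cf (@cst_continuous K R 0).
by under eq_fun do rewrite addr0.
Qed.

Lemma continuous_sub f g : continuous f -> continuous g -> continuous (fun k => f k - g k).
Proof.
move=> cf cg; have := continuous_comb (-1) g f cg cf.
by under eq_fun do rewrite mulN1r addrC.
Qed.

Lemma continuous_sum (I : Type) (s : seq I) (F : I -> K -> R) :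
  (forall i, continuous (F i)) -> continuous (fun k => \sum_(i <- s) F i k).
Proof.
move=> cF; elim: s => [|i s IH]; first by under eq_fun do rewrite big_nil; exact: cst_continuous.
by under eq_fun do rewrite big_cons; exact: continuous_add.
Qed.

End Continuity.

Section SupNorm.
Context {R : realType} {K : topologicalType}.
Hypothesis cK : compact [set: K].
Implicit Types f : K -> R.

Lemma norm_le_sup_norm f k : continuous f -> `|f k| <= sup_norm f.
Proof.
move=> cf; apply: sup_upper_bound; last by exists k.
apply: compact_has_sup; first by exists `|f k|, k.
by apply: continuous_compact => //; apply/continuous_subspaceT/continuous_norm.
Qed.

Lemma sup_norm_le f c : 0 <= c -> (forall k, `|f k| <= c) -> sup_norm f <= c.
Proof.
move=> c0 fc; have [[k _]|K0] := pselect (exists k : K, True).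
  by apply: ge_sup; [exists `|f k|, k | move=> _ [k' _ <-]].
rewrite /sup_norm; suff -> : [set `|f k| | k in [set: K]] = set0 by rewrite sup0.
by apply/seteqP; split=> // y [k _ _]; apply: K0; exists k.
Qed.

Lemma sup_norm_ge0 f : 0 <= sup_norm f.
Proof.
have [hs|nhs] := pselect (has_sup [set `|f k| | k in [set: K]]); last by rewrite /sup_norm sup_out.
have [_ [k _ _]] := hs.1.
by apply: le_trans (normr_ge0 (f k)) _; apply: sup_upper_bound => //; exists k.
Qed.

Lemma sup_norm_attained f : continuous f -> 0 < sup_norm f ->
  exists k, `|f k| = sup_norm f.
Proof.
move=> cf; have [[k0 _] _|K0] := pselect (exists k : K, True); last first.
  have : sup_norm f <= 0 by apply: sup_norm_le => // k; exfalso; apply: K0; exists k.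
  by rewrite leNgt => /negP.
have [k _ kmax] := compact_EVT_max (ex_intro _ k0 I) cK
  (continuous_subspaceT (continuous_norm f cf)).
exists k; apply/esym/sup_eq_max; first by exists k.
by move=> _ [k' _ <-]; apply: kmax; rewrite inE.
Qed.

End SupNorm.

Lemma CK_dual_norm_ge0 {R : realType} {K : topologicalType} (phi : (K -> R) -> R) :
  0 <= CK_dual_norm phi.
Proof.
rewrite /CK_dual_norm.
set A := [set `|phi f| | f in _].
have [hs|nhs] := pselect (has_sup A); last by rewrite sup_out.
have [_ [f Af _]] := hs.1.
by apply: le_trans (normr_ge0 (phi f)) _; apply: sup_upper_bound => //; exists f.
Qed.

Section CKDual.
Context {R : realType} {K : topologicalType}.
Hypothesis cK : compact [set: K].
Variable phi : (K -> R) -> R.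
Hypothesis phi_dual : CK_dual phi.
Implicit Types (f g h : K -> R).

Let phi_lin := phi_dual.1.

Lemma CK_dual0 : phi (fun=> 0) = 0.
Proof.
have := phi_lin 1 _ _ (@cst_continuous K R 0) (@cst_continuous K R 0).
have -> : (fun _ : K => 1 * 0 + 0) = fun=> 0 :> R by apply/funext => k; rewrite mulr0 addr0.
lra.
Qed.

Lemma CK_dualZ a f : continuous f -> phi (fun k => a * f k) = a * phi f.
Proof.
move=> cf; have := phi_lin a _ _ cf (@cst_continuous K R 0).
by under eq_fun do rewrite addr0; rewrite CK_dual0 addr0.
Qed.

Lemma CK_dualD f g : continuous f -> continuous g ->
  phi (fun k => f k + g k) = phi f + phi g.
Proof.
by move=> cf cg; have := phi_lin 1 _ _ cf cg; under eq_fun do rewrite mul1r; rewrite mul1r.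
Qed.

Lemma CK_dual_norm_bound f : continuous f -> `|phi f| <= CK_dual_norm phi * sup_norm f.
Proof.
move=> cf; have [M phiM] := phi_dual.2.
have hs : has_sup [set `|phi g| | g in [set g | continuous g /\ sup_norm g <= 1]].
  split.
    exists `|phi (fun=> 0)|, (fun=> 0) => //; split; first exact: cst_continuous.
    by apply: sup_norm_le => // k; rewrite normr0.
  exists `|M| => _ [g [cg g1] <-]; apply: le_trans (phiM g cg) _.
  apply: le_trans (ler_norm _) _; rewrite normrM (ger0_norm (sup_norm_ge0 g)).
  exact: ler_piMr.
have [f0|fn0] := eqVneq (sup_norm f) 0.
  rewrite f0 mulr0 normr_le0; suff -> : f = fun=> 0 by rewrite CK_dual0.
  apply/funext => k; apply/normr0_eq0/le_anti.
  by rewrite normr_ge0 andbT -f0 norm_le_sup_norm.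
have fpos : 0 < sup_norm f by rewrite lt_neqAle eq_sym fn0 sup_norm_ge0.
have : `|phi (fun k => (sup_norm f)^-1 * f k)| <= CK_dual_norm phi.
  apply: sup_upper_bound => //; exists (fun k => (sup_norm f)^-1 * f k) => //; split.
    exact: continuous_scale.
  apply: sup_norm_le => // k; rewrite normrM ger0_norm ?invr_ge0 ?sup_norm_ge0 //.
  by rewrite mulrC ler_pdivrMr // mul1r norm_le_sup_norm.
by rewrite CK_dualZ // normrM normfV (gtr0_norm fpos) mulrC ler_pdivrMr.
Qed.

Lemma CK_dual_normE D h : (forall f, continuous f -> `|phi f| <= D * sup_norm f) ->
  continuous h -> sup_norm h <= 1 -> `|phi h| = D -> CK_dual_norm phi = D.
Proof.
move=> phiD ch h1 phih; apply: sup_eq_max; first by exists h.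
move=> _ [f [cf f1] <-]; apply: le_trans (phiD f cf) _.
by rewrite -[leRHS]mulr1 ler_wpM2l // -phih.
Qed.

End CKDual.

Lemma CK_dual_point_eval {R : realType} {K : topologicalType} (c : R) (l : K) :
  compact [set: K] -> `|c| = 1 ->
  CK_dual (fun f => c * f l) /\ CK_dual_norm (fun f => c * f l) = 1.
Proof.
move=> cK c1; have le1 f : continuous f -> `|c * f l| <= 1 * sup_norm f.
  by move=> cf; rewrite normrM c1 !mul1r norm_le_sup_norm.
split; first by split; [move=> a f g _ _; ring | exists 1].
apply: (CK_dual_normE _ _ _ le1 (@cst_continuous K R 1)).
  by apply: sup_norm_le => // _; rewrite normr1.
by rewrite normrM c1 normr1 mulr1.
Qed.

(** * Urysohn functions and peak functions at G_delta points *)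

Section Separation.
Context {R : realType} {K : topologicalType}.
Hypotheses (nK : normal_space K) (hK : hausdorff_space K).

Lemma urysohn01 (A B : set K) : closed A -> closed B -> A `&` B = set0 ->
  exists f : K -> R, [/\ continuous f, (forall k, A k -> f k = 0),
     (forall k, B k -> f k = 1) & (forall k, 0 <= f k <= 1)].
Proof.
move=> cA cB AB; have [f [cf fA fB fr]] := urysohn_ext_itv nK cA cB AB (@ltr01 R).
exists f; split => // [k Ak|k Bk|k]; [exact: fA | exact: fB |].
by have /fr : range f (f k) by exists k.
Qed.

Lemma closed_point (k : K) : closed [set k].
Proof. exact/accessible_closed_set1/hausdorff_accessible. Qed.

Lemma interpolate_points (I : finType) (p : I -> K) (y : I -> R) : injective p ->
  exists f : K -> R, continuous f /\ forall i, f (p i) = y i.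
Proof.
move=> p_inj.
have sep i : exists u : K -> R, continuous u /\ forall j, u (p j) = (i == j)%:R.
  have cA : closed (p @` [set j | j != i]).
    apply: (proj1 accessible_finite_set_closed (hausdorff_accessible hK)).
    exact/finite_image/finite_finset.
  have disj : p @` [set j | j != i] `&` [set p i] = set0.
    by apply/seteqP; split => // _ [[j /= ji <-] /p_inj ij]; move: ji; rewrite ij eqxx.
  have [u [cu u0 u1 _]] := urysohn01 _ _ cA (closed_point (p i)) disj.
  exists u; split => // j; have [<-|ij] := eqVneq i j; first exact: u1.
  by apply: u0; exists j => //=; rewrite eq_sym.
have [u uP] := choice sep.
exists (fun k => \sum_i y i * u i k); split.
  by apply: continuous_sum => i; apply: continuous_scale; case: (uP i).
move=> j; rewrite (bigD1 j) //= big1 => [|i ij]; first by rewrite (uP j).2 eqxx mulr1 addr0.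
by rewrite (uP i).2 (negbTE ij) mulr0.
Qed.

End Separation.

Lemma Gdelta_point_peak {R : realType} {K : topologicalType} (f : K -> R) (p : K) :
  continuous f -> (forall k, f k <= 1) -> f p = 1 -> (forall k, f k = 1 -> k = p) ->
  Gdelta_point p.
Proof.
move=> cf f1 fp fpeak; exists (fun n => f @^-1` [set x | 1 - n.+1%:R^-1 < x]); split.
  by move=> n; apply: open_comp; [move=> k _; exact: cf | exact: open_gt].
apply/seteqP; split => [k fk | _ -> n _]; last by rewrite /= fp ltrBlDr ltrDl.
apply: fpeak; apply/le_anti; rewrite f1 /= leNgt; apply/negP => /ltr_add_invr [n].
by have := fk n I; rewrite /= ltrBlDr => /lt_trans/[apply]; rewrite ltxx.
Qed.

Lemma half_expr_lt {R : realType} (e : R) : 0 < e -> exists m, 2^-1 ^+ m < e.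
Proof.
move=> e0; have [n] := ltr_add_invr e0; rewrite add0r => ne.
exists n; apply: le_lt_trans ne.
rewrite exprVn lef_pV2 ?posrE ?exprn_gt0 ?ltr0n // -natrX ler_nat.
exact: ltn_expl.
Qed.

Section DyadicSum.
Context {R : realType} {K : topologicalType}.
Variable g : nat -> K -> R.
Hypotheses (cg : forall n, continuous (g n)) (g01 : forall n k, 0 <= g n k <= 1).

Local Notation q := (2^-1 : R).

Definition dyadic_partial m k := \sum_(0 <= n < m) q ^+ n.+1 * g n k.

Definition dyadic_sum k := sup (range (dyadic_partial ^~ k)).

Let q_gt0 : 0 < q. Proof. by rewrite invr_gt0. Qed.

Let qS n : q ^+ n = q ^+ n.+1 + q ^+ n.+1.
Proof. by rewrite exprS -mulrDl [q + q](_ : _ = 1) ?mul1r //; lra. Qed.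

Let term_bounds n k : 0 <= q ^+ n.+1 * g n k <= q ^+ n.+1.
Proof.
have /andP[g0 g1] := g01 n k; have qn0 : 0 <= q ^+ n.+1 by rewrite exprn_ge0 // ltW.
by rewrite mulr_ge0 //= ler_piMr.
Qed.

Lemma dyadic_partial0 k : dyadic_partial 0 k = 0.
Proof. by rewrite /dyadic_partial big_geq. Qed.

Lemma dyadic_partialS m k :
  dyadic_partial m.+1 k = dyadic_partial m k + q ^+ m.+1 * g m k.
Proof. by rewrite /dyadic_partial big_nat_recr. Qed.

Lemma dyadic_partial_tail m j k :
  0 <= dyadic_partial (m + j) k - dyadic_partial m k <= q ^+ m - q ^+ (m + j).
Proof.
elim: j => [|j IH]; first by rewrite addn0 !subrr lexx.
rewrite addnS dyadic_partialS; have /andP[t0 t1] := term_bounds (m + j) k.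
by move: IH (qS (m + j)) => /andP[IH1 IH2] qmj; apply/andP; split; lra.
Qed.

Lemma dyadic_partial_le m k : dyadic_partial m k <= 1 - q ^+ m.
Proof. by have /andP[_] := dyadic_partial_tail 0 m k; rewrite dyadic_partial0 subr0 expr0. Qed.

Lemma dyadic_sum_approx m k :
  dyadic_partial m k <= dyadic_sum k <= dyadic_partial m k + q ^+ m.
Proof.
have ne : range (dyadic_partial ^~ k) !=set0 by exists (dyadic_partial 0 k), 0%N.
have ub : ubound (range (dyadic_partial ^~ k)) (dyadic_partial m k + q ^+ m).
  move=> _ [m' _ <-]; have [mm'|m'm] := leqP m m'.
    have /andP[_] := dyadic_partial_tail m (m' - m) k; rewrite subnKC //.
    by have := exprn_ge0 m' (ltW q_gt0); lra.
  have /andP[+ _] := dyadic_partial_tail m' (m - m') k; rewrite subnKC; last exact: ltnW.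
  by have := exprn_ge0 m (ltW q_gt0); lra.
apply/andP; split; last exact: ge_sup.
by apply: sup_upper_bound; [split; [|exists (dyadic_partial m k + q ^+ m)] | exists m].
Qed.

Lemma dyadic_sum_ge0 k : 0 <= dyadic_sum k.
Proof.
have /andP[+ _] := dyadic_sum_approx 0 k.
by apply: le_trans; rewrite dyadic_partial0.
Qed.

Lemma dyadic_sum_le1 k : dyadic_sum k <= 1.
Proof. by have /andP[_] := dyadic_sum_approx 0 k; rewrite dyadic_partial0 expr0 add0r. Qed.

Lemma continuous_dyadic_sum : continuous dyadic_sum.
Proof.
move=> k; apply/cvgrPdist_lt => e e0.
have e3 : 0 < e / 3 by rewrite divr_gt0.
have [m qm] := half_expr_lt _ e3.
have cS : continuous (dyadic_partial m).
  apply: continuous_sum => n; exact: continuous_scale.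
move/cvgrPdist_lt : (cS k) => /(_ _ e3); apply: filterS => k'.
have /andP[a1 a2] := dyadic_sum_approx m k; have /andP[b1 b2] := dyadic_sum_approx m k'.
by rewrite !ltr_norml => /andP[c1 c2]; apply/andP; split; lra.
Qed.

Lemma dyadic_sum_eq1 k : (forall n, g n k = 1) -> dyadic_sum k = 1.
Proof.
move=> g1; apply/le_anti; rewrite dyadic_sum_le1 /= leNgt; apply/negP => lt1.
have [m qm] : exists m, q ^+ m < 1 - dyadic_sum k by apply: half_expr_lt; rewrite subr_gt0.
have Sm : dyadic_partial m k = 1 - q ^+ m.
  elim: m {qm} => [|m IH]; first by rewrite dyadic_partial0 expr0 subrr.
  by rewrite dyadic_partialS IH g1 mulr1 (qS m); lra.
by have /andP[+ _] := dyadic_sum_approx m k; rewrite Sm; lra.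
Qed.

Lemma dyadic_sum_eq0 k : (forall n, g n k = 0) -> dyadic_sum k = 0.
Proof.
move=> g0; apply/le_anti; rewrite dyadic_sum_ge0 andbT; apply: ge_sup.
  by exists (dyadic_partial 0 k), 0%N.
by move=> _ [m _ <-]; rewrite /dyadic_partial big1 // => n _; rewrite g0 mulr0.
Qed.

Lemma dyadic_sum_eq1_inv k n : dyadic_sum k = 1 -> g n k = 1.
Proof.
move=> F1; apply/le_anti; have /andP[_ ->] //= := g01 n k; rewrite leNgt; apply/negP => gn1.
suff : dyadic_sum k <= 1 - q ^+ n.+1 * (1 - g n k).
  have : 0 < q ^+ n.+1 * (1 - g n k) by rewrite mulr_gt0 ?exprn_gt0 // subr_gt0.
  by rewrite F1; lra.
apply: ge_sup; first by exists (dyadic_partial 0 k), 0%N.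
move=> _ [m _ <-]; pose M := maxn m n.+1.
have /andP[tm _] := dyadic_partial_tail m (M - m) k.
have /andP[_ tn] := dyadic_partial_tail n.+1 (M - n.+1) k.
rewrite !subnKC ?leq_maxl ?leq_maxr // in tm tn.
have := dyadic_partial_le n k; have := exprn_ge0 M (ltW q_gt0); have := qS n.
by rewrite dyadic_partialS in tn; lra.
Qed.

End DyadicSum.

Lemma Gdelta_peak_function {R : realType} {K : topologicalType} (p : K) (V : set K) :
  normal_space K -> hausdorff_space K -> Gdelta_point p -> open V -> V p ->
  exists f : K -> R, [/\ continuous f, (forall k, 0 <= f k <= 1), f p = 1,
     (forall k, f k = 1 -> k = p) & (forall k, ~ V k -> f k = 0)].
Proof.
move=> nK hK [U [oU Up]] oV Vp.
have pU n : U n p by have : [set p] p by []; rewrite -Up; apply.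
have urysohn n : exists g : K -> R, [/\ continuous g, (forall k, ~ (U n `&` V) k -> g k = 0),
    (forall k, [set p] k -> g k = 1) & forall k, 0 <= g k <= 1].
  apply: (urysohn01 nK (~` (U n `&` V)) [set p]).
  - by apply: open_closedC; exact: openI.
  - exact: closed_point.
  by apply/seteqP; split => // t [/= nUV tp]; apply: nUV; rewrite tp.
have [g gP] := choice urysohn.
have cg n : continuous (g n) by case: (gP n).
have g01 n k : 0 <= g n k <= 1 by case: (gP n) => _ _ _; apply.
exists (dyadic_sum g); split.
- exact: continuous_dyadic_sum.
- by move=> k; rewrite dyadic_sum_ge0 ?dyadic_sum_le1.
- by apply: dyadic_sum_eq1 => // n; case: (gP n) => _ _ + _; apply.
- move=> k F1; suff : (\bigcap_n U n) k by rewrite Up.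
  move=> n _; apply: contrapT => nUk.
  have gn0 : g n k = 0 by case: (gP n) => _ -> // [].
  by have := dyadic_sum_eq1_inv _ g01 _ n F1; rewrite gn0 => /eqP; rewrite eq_sym oner_eq0.
- move=> k nVk; apply: (dyadic_sum_eq0 _ g01) => n.
  by case: (gP n) => _ -> // [].
Qed.

Lemma eq_nat_dist_lt1 {R : realDomainType} (i j : nat) : `|i%:R - j%:R : R| < 1 -> i = j.
Proof.
move=> d; case: (ltngtP i j) => // lt; exfalso; move: d lt;
  by rewrite ltr_norml -(ler_nat R) -natr1; lra.
Qed.

Lemma Gdelta_peak_family {R : realType} {N : nat} {K : topologicalType} (p : 'I_N -> K) :
  normal_space K -> hausdorff_space K -> injective p -> (forall i, Gdelta_point (p i)) ->
  exists f : 'I_N -> K -> R, [/\ forall i, continuous (f i), forall i k, 0 <= f i k <= 1,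
    forall i j, f i (p j) = (i == j)%:R, forall i k, f i k = 1 -> k = p i &
    forall i j k, f i k != 0 -> f j k != 0 -> i = j].
Proof.
move=> nK hK p_inj p_Gdelta.
(* a single [u] with [u (p i) = i] yields pairwise disjoint neighbourhoods [V i] *)
have [u [cu up]] := interpolate_points nK hK _ p (fun i => (i : nat)%:R : R) p_inj.
pose V (i : 'I_N) := (fun k => `|u k - i%:R|) @^-1` [set x | x < 2^-1].
have oV i : open (V i).
  apply: open_comp; last exact: open_lt.
  by move=> k _; apply: continuous_norm; apply: continuous_sub => //; exact: cst_continuous.
have Vp i : V i (p i) by rewrite /V /= up subrr normr0 invr_gt0.
have V_disj i j k : V i k -> V j k -> i = j.
  rewrite /V /= => Vi Vj; apply/val_inj/eq_nat_dist_lt1.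
  by move: Vi Vj; rewrite !ltr_norml; lra.
have peak i := @Gdelta_peak_function R K _ _ nK hK (p_Gdelta i) (oV i) (Vp i).
have [f fP] := choice peak.
have f_offV i k : ~ V i k -> f i k = 0 by case: (fP i) => _ _ _ _; apply.
have f_onV i k : f i k != 0 -> V i k.
  by move=> fik; apply: contrapT => /f_offV; apply/eqP.
exists f; split => [i|i k|i j|i k|i j k /f_onV Vi /f_onV Vj].
- by case: (fP i).
- by case: (fP i) => _ + _ _ _; apply.
- have [<-|ij] := eqVneq i j; first by case: (fP i).
  by rewrite f_offV // => Vi; move/eqP: ij; apply; exact: V_disj Vi (Vp j).
- by case: (fP i) => _ _ _ + _; apply.
- exact: V_disj Vi Vj.
Qed.

(** * Necessity *)

Section IsometryPeaks.
Context {R : realType} {N : nat} {K : topologicalType}.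
Hypothesis cK : compact [set: K].
Variable T : ('I_N -> R) -> K -> R.
Hypothesis T_iso : lin_isometry T.

Let cT := T_iso.1.
Let T_lin := T_iso.2.1.
Let T_norm := T_iso.2.2.

Lemma lin_isometry_expand x k : T x k = \sum_i x i * T (unit_vec i) k.
Proof. by apply: (lin_fun_linf_expand (fun x => T x k)) => a y z; rewrite T_lin. Qed.

Lemma lin_isometry_unit_le1 i k : `|T (unit_vec i) k| <= 1.
Proof. by rewrite -(linf_norm_unit_vec i) -T_norm norm_le_sup_norm. Qed.

Lemma lin_isometry_unit_peak i : exists k, `|T (unit_vec i) k| = 1.
Proof.
have pos : 0 < sup_norm (T (unit_vec i)) by rewrite T_norm linf_norm_unit_vec ltr01.
have [k Tk] := sup_norm_attained cK _ (cT (unit_vec i)) pos.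
by exists k; rewrite Tk T_norm linf_norm_unit_vec.
Qed.

(* testing the isometry on [e_i +- e_j] *)
Lemma lin_isometry_peak_disjoint i j k :
  `|T (unit_vec i) k| = 1 -> j != i -> T (unit_vec j) k = 0.
Proof.
move=> Ti1 ji.
have le1 (t : R) : `|t| = 1 -> `|t * T (unit_vec j) k + T (unit_vec i) k| <= 1.
  move=> t1; have -> : t * T (unit_vec j) k + T (unit_vec i) k =
      T (fun l => t * unit_vec j l + unit_vec i l) k by rewrite T_lin.
  apply: le_trans (norm_le_sup_norm cK _ k (cT _)) _.
  rewrite T_norm; apply: linf_norm_le => // l; rewrite /unit_vec.
  have [->|lj] := eqVneq l j; first by rewrite (negbTE ji) mulr1 addr0 t1.
  by rewrite mulr0 add0r; case: (l == i); rewrite ?normr1 ?normr0.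
have := le1 1 (normr1 _); have := le1 (-1); rewrite normrN normr1 => /(_ erefl).
move/eqP: Ti1; rewrite eqr_norml ler01 andbT !ler_norml.
by case/orP => /eqP ->; lra.
Qed.

End IsometryPeaks.

Section UEmbeddingPeaks.
Context {R : realType} {N : nat} {K : topologicalType}.
Hypotheses (cK : compact [set: K]) (hK : hausdorff_space K).
Variable T : ('I_N -> R) -> K -> R.
Hypothesis T_U : U_embedding T.

Let T_iso := T_U.1.

(* both [f |-> T e_i k * f k] and [f |-> T e_i k' * f k'] are norm-preserving extensions of
   the i-th coordinate functional *)
Lemma U_embedding_unique_peak i k k' :
  `|T (unit_vec i) k| = 1 -> `|T (unit_vec i) k'| = 1 -> k = k'.
Proof.
move=> Tk Tk'; pose xs (x : 'I_N -> R) := x i.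
have linxs : lin_fun_linf xs by [].
have xs_norm : dual_norm_linf xs = 1.
  rewrite dual_norm_linfE // (bigD1 i) //= big1 => [|j ji].
    by rewrite /xs /unit_vec eqxx normr1 addr0.
  by rewrite /xs /unit_vec eq_sym (negbTE ji) normr0.
have ext l : `|T (unit_vec i) l| = 1 -> forall x, T (unit_vec i) l * T x l = xs x.
  move=> Tl1 x; rewrite (lin_isometry_expand _ T_iso x) (bigD1 i) //= big1 ?addr0 => [|j ji].
    by rewrite mulrCA -expr2 -real_normK ?num_real // Tl1 expr1n mulr1.
  by rewrite (lin_isometry_peak_disjoint cK _ T_iso _ _ _ Tl1 ji) mulr0.
have [dk nk] := CK_dual_point_eval _ k cK Tk; have [dk' nk'] := CK_dual_point_eval _ k' cK Tk'.
have same := (T_U.2 xs linxs).2 _ _ dk dk' (ext k Tk) (etrans nk (esym xs_norm))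
  (ext k' Tk') (etrans nk' (esym xs_norm)).
apply: contrapT => kk'.
have disj : [set k] `&` [set k'] = set0.
  by apply/seteqP; split => // t [/= tk tk']; apply: kk'; rewrite -tk -tk'.
have [f [cf f0 f1 _]] := urysohn01 (R := R) (compact_normal hK cK) _ _
  (closed_point hK k) (closed_point hK k') disj.
have := same f cf; rewrite f0 // f1 // mulr0 mulr1 => /esym T0.
by move: Tk'; rewrite T0 normr0 => /esym/eqP; rewrite oner_eq0.
Qed.

End UEmbeddingPeaks.

Lemma Gdelta_points_of_U_embedding {R : realType} {N : nat} {K : topologicalType}
    (T : ('I_N -> R) -> K -> R) :
  compact [set: K] -> hausdorff_space K -> U_embedding T ->
  exists p : 'I_N -> K, injective p /\ forall i, Gdelta_point (p i).
Proof.
move=> cK hK T_U; have T_iso := T_U.1.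
have [p Tp] := choice (lin_isometry_unit_peak cK _ T_iso).
exists p; split => [i j pij|i].
  apply: contrapT => /eqP; rewrite eq_sym => ji.
  have := lin_isometry_peak_disjoint cK _ T_iso _ _ _ (Tp i) ji.
  by move: (Tp j); rewrite -pij => /[swap] ->; rewrite normr0 => /esym/eqP; rewrite oner_eq0.
apply: (Gdelta_point_peak (fun k => `|T (unit_vec i) k|)).
- exact/continuous_norm/T_iso.1.
- exact: lin_isometry_unit_le1.
- exact: Tp.
- by move=> k Tk; exact: U_embedding_unique_peak cK hK _ T_U i k (p i) Tk (Tp i).
Qed.

(** * Functionals attaining their norm *)

Lemma compact_pos_lbound {R : realType} {K : topologicalType} (A : set K) (f : K -> R) :
  compact A -> {within A, continuous f} -> (forall k, A k -> 0 < f k) ->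
  exists2 d, 0 < d & forall k, A k -> d <= f k.
Proof.
move=> cA cf fpos; have [[k0 Ak0]|A0] := pselect (A !=set0); last first.
  by exists 1 => // k Ak; exfalso; apply: A0; exists k.
have [c /set_mem Ac cmin] := compact_EVT_min (ex_intro _ k0 Ak0) cA cf.
by exists (f c); [exact: fpos | move=> k Ak; apply: cmin; rewrite inE].
Qed.

(* soft thresholding: [shrink e t = sg t * max (|t| - e) 0] *)
Definition shrink {R : realType} (e t : R) : R := t + (`|t - e| - `|t + e|) / 2.

Lemma shrinkP {R : realType} (e t : R) : 0 < e ->
  [/\ `|t - shrink e t| <= e, `|t| < e -> shrink e t = 0 & `|shrink e t| <= `|t|].
Proof.
rewrite /shrink => e0.
have [h1|h1] := leP 0 (t - e); [rewrite (ger0_norm h1) | rewrite (ltr0_norm h1)];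
have [h2|h2] := leP 0 (t + e); rewrite ?(ger0_norm h2) ?(ltr0_norm h2);
have [h3|h3] := leP 0 t; rewrite ?(ger0_norm h3) ?(ltr0_norm h3);
(split; [rewrite ler_norml; apply/andP; split; lra
        | move=> h; apply/eqP; rewrite eq_le; apply/andP; split; lra
        | rewrite ler_norml; apply/andP; split; lra]).
Qed.

Lemma continuous_shrink {R : realType} {K : topologicalType} (e : R) (g : K -> R) :
  continuous g -> continuous (fun k => shrink e (g k)).
Proof.
move=> cg; rewrite /shrink; apply: continuous_add => //.
under eq_fun do rewrite mulrC; apply: continuous_scale.
by apply: continuous_sub; apply: continuous_norm;
  [apply: continuous_sub | apply: continuous_add] => //; exact: cst_continuous.
Qed.

Section NormingFunctional.
Context {R : realType} {K : topologicalType}.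
Hypothesis cK : compact [set: K].
Variables (phi : (K -> R) -> R) (h : K -> R).
Hypotheses (phi_dual : CK_dual phi) (ch : continuous h) (h_le1 : forall k, `|h k| <= 1).
Hypothesis phi_h : phi h = CK_dual_norm phi.

Lemma norming_dual_dominated u C : continuous u -> 0 <= C ->
  (forall k, `|u k| <= C * (1 - `|h k|)) -> phi u = 0.
Proof.
move=> cu C0 uC.
have bound c : `|c| = 1 -> c * phi u + C * CK_dual_norm phi <= C * CK_dual_norm phi.
  move=> c1; have -> : c * phi u + C * CK_dual_norm phi = phi (fun k => c * u k + C * h k).
    by rewrite phi_dual.1 ?CK_dualZ -?phi_h //; exact: continuous_scale.
  apply: le_trans (ler_norm _) _; rewrite [leRHS]mulrC.
  apply: le_trans (CK_dual_norm_bound cK _ phi_dual _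
    (continuous_comb c _ _ cu (continuous_scale C _ ch))) _.
  rewrite ler_wpM2l ?CK_dual_norm_ge0 //; apply: sup_norm_le => // k.
  apply: le_trans (ler_normD _ _) _; rewrite !normrM c1 (ger0_norm C0) mul1r.
  by have := uC k; lra.
have := bound 1 (normr1 _); have := bound (-1); rewrite normrN normr1 => /(_ erefl).
lra.
Qed.

Section Vanishing.
Variable g : K -> R.
Hypotheses (cg : continuous g) (g_peak : forall k, `|h k| = 1 -> g k = 0).

Lemma norming_dual_shrink e : 0 < e -> phi (fun k => shrink e (g k)) = 0.
Proof.
move=> e0; have [d d0 dh] : exists2 d, 0 < d & forall k, e <= `|g k| -> d <= 1 - `|h k|.
  apply: (compact_pos_lbound ((fun k => `|g k|) @^-1` [set x | e <= x])); rewrite /=.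
  - apply: (subclosed_compact _ cK) => //; apply: preimage_closed; last exact: closed_ge.
    by move=> k _; exact: continuous_norm.
  - by apply/continuous_subspaceT/continuous_sub; [exact: cst_continuous | exact: continuous_norm].
  - move=> k egk; rewrite subr_gt0 lt_neqAle h_le1 andbT; apply/eqP => /g_peak gk0.
    by move: egk; rewrite gk0 normr0 leNgt e0.
have C0 : 0 <= sup_norm g / d by rewrite divr_ge0 ?sup_norm_ge0 ?ltW.
apply: (norming_dual_dominated _ _ (continuous_shrink e _ cg) C0) => k.
have [_ shrink0 shrink_le] := shrinkP e (g k) e0.
have [gk_lt|gk_ge] := ltP `|g k| e.
  by rewrite shrink0 // normr0 mulr_ge0 // subr_ge0.
apply: le_trans shrink_le _; apply: le_trans (norm_le_sup_norm cK _ k cg) _.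
by rewrite -[leLHS](divfK (lt0r_neq0 d0) (sup_norm g)) ler_wpM2l ?dh.
Qed.

Lemma norming_dual_vanish : phi g = 0.
Proof.
set D := CK_dual_norm phi; have D0 : 0 <= D := CK_dual_norm_ge0 phi.
apply/normr0_eq0/le_anti; rewrite normr_ge0 andbT; apply/ler_addgt0Pr => e e0.
have De : 0 < e / (D + 1) by rewrite divr_gt0 ?ltr_wpDl.
set u := fun k => shrink (e / (D + 1)) (g k).
have cu : continuous u by exact: continuous_shrink.
have gE : g = fun k => u k + (g k - u k) by apply/funext => k; rewrite addrC subrK.
rewrite {1}gE CK_dualD //; last exact: continuous_sub.
rewrite norming_dual_shrink // !add0r; apply: le_trans (CK_dual_norm_bound cK _ phi_dual _
  (continuous_sub _ _ cg cu)) _.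
apply: le_trans (_ : D * (e / (D + 1)) <= e).
  rewrite ler_wpM2l //; apply: sup_norm_le => [|k]; first exact: ltW.
  by have [] := shrinkP (e / (D + 1)) (g k) De.
by rewrite mulrA ler_pdivrMr ?ltr_wpDl // mulrC ler_pM2l // lerDl.
Qed.

End Vanishing.

End NormingFunctional.

(** * Sufficiency *)

Section Restriction.
Context {R : realType} {N : nat} {K : topologicalType}.
Hypothesis cK : compact [set: K].
Variable p : 'I_N -> K.

Lemma restrict_dual_le (xs : ('I_N -> R) -> R) g : lin_fun_linf xs -> continuous g ->
  `|xs (fun i => g (p i))| <= dual_norm_linf xs * sup_norm g.
Proof.
move=> linxs cg; rewrite dual_norm_linfE //; apply: le_trans (lin_fun_linf_le _ _ linxs) _.
rewrite ler_wpM2l ?sumr_ge0 //; apply: linf_norm_le => [|i]; first exact: sup_norm_ge0.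
exact: norm_le_sup_norm.
Qed.

Lemma CK_dual_restrict (xs : ('I_N -> R) -> R) : lin_fun_linf xs ->
  CK_dual (fun g => xs (fun i => g (p i))).
Proof.
move=> linxs; split=> [a g1 g2 _ _|]; first exact: linxs.
by exists (dual_norm_linf xs) => g; exact: restrict_dual_le.
Qed.

End Restriction.

Section PeakEmbedding.
Context {R : realType} {N : nat} {K : topologicalType}.
Hypothesis cK : compact [set: K].
Variables (f : 'I_N -> K -> R) (p : 'I_N -> K).
Hypotheses (cf : forall i, continuous (f i)) (f01 : forall i k, 0 <= f i k <= 1)
  (f_p : forall i j, f i (p j) = (i == j)%:R) (f_peak : forall i k, f i k = 1 -> k = p i)
  (f_disj : forall i j k, f i k != 0 -> f j k != 0 -> i = j).

Definition peak_embedding (x : 'I_N -> R) : K -> R := fun k => \sum_i x i * f i k.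

Local Notation T := peak_embedding.

Lemma peak_embedding_p x i : T x (p i) = x i.
Proof.
rewrite /T (bigD1 i) //= f_p eqxx mulr1 big1 ?addr0 // => j ji.
by rewrite f_p (negbTE ji) mulr0.
Qed.

Lemma peak_embedding_single x k : T x k = 0 \/ exists i, T x k = x i * f i k.
Proof.
have [[i fik]|f0] := pselect (exists i, f i k != 0); [right; exists i | left].
  rewrite /T (bigD1 i) //= big1 ?addr0 // => j ji.
  have [->|fjk] := eqVneq (f j k) 0; first by rewrite mulr0.
  by move/eqP: ji; case; exact: f_disj fjk fik.
rewrite /T big1 // => i _.
by have [->|fik] := eqVneq (f i k) 0; [rewrite mulr0 | exfalso; apply: f0; exists i].
Qed.

Lemma peak_embedding_le x k : `|T x k| <= linf_norm x.
Proof.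
have [->|[i ->]] := peak_embedding_single x k; first by rewrite normr0 linf_norm_ge0.
have /andP[f0 f1] := f01 i k.
by rewrite normrM (ger0_norm f0) (le_trans _ (linf_norm_ge x i)) // ler_piMr.
Qed.

Lemma peak_embedding_peak x k : linf_norm x <= 1 -> `|T x k| = 1 -> exists i, k = p i.
Proof.
move=> x1; have [->|[i Txk]] := peak_embedding_single x k.
  by rewrite normr0 => /esym/eqP; rewrite oner_eq0.
have /andP[f0 f1] := f01 i k; have xi1 := le_trans (linf_norm_ge x i) x1.
rewrite Txk normrM (ger0_norm f0) => xf1; exists i; apply: f_peak.
by apply/le_anti; rewrite f1 /= -xf1 ler_piMl.
Qed.

Lemma continuous_peak_embedding x : continuous (T x).
Proof. by apply: continuous_sum => i; exact: continuous_scale. Qed.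

Lemma peak_embedding_lin_isometry : lin_isometry T.
Proof.
split; first exact: continuous_peak_embedding.
split => [a x y|x].
  by apply/funext => k; rewrite /T mulr_sumr -big_split; apply: eq_bigr => i _ /=; ring.
apply/le_anti/andP; split.
  by apply: sup_norm_le; [exact: linf_norm_ge0 | exact: peak_embedding_le].
apply: linf_norm_le => [|i]; first exact: sup_norm_ge0.
by rewrite -(peak_embedding_p x i) norm_le_sup_norm //; exact: continuous_peak_embedding.
Qed.

Section Extension.
Variable xs : ('I_N -> R) -> R.
Hypothesis linxs : lin_fun_linf xs.

Let h := T (sign_vec xs).

Let h_le1 k : `|h k| <= 1.
Proof. exact: le_trans (peak_embedding_le _ k) (linf_norm_sign_vec xs). Qed.

Let xs_h : xs (sign_vec xs) = dual_norm_linf xs.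
Proof. by rewrite lin_fun_linf_sign_vec // dual_norm_linfE. Qed.

Lemma restrict_peak_embedding x : xs (fun i => T x (p i)) = xs x.
Proof. by congr xs; apply/funext => i; exact: peak_embedding_p. Qed.

Lemma peak_embedding_restrict_norm :
  CK_dual_norm (fun g => xs (fun i => g (p i))) = dual_norm_linf xs.
Proof.
apply: (CK_dual_normE _ _ h (fun g => restrict_dual_le cK p xs g linxs)).
- exact: continuous_peak_embedding.
- by rewrite peak_embedding_lin_isometry.2.2; exact: linf_norm_sign_vec.
- by rewrite restrict_peak_embedding xs_h ger0_norm // dual_norm_linfE // sumr_ge0.
Qed.

(* a norm-preserving extension attains its norm at [h], and [|h| = 1] only at the [p i] *)
Lemma peak_embedding_extension_unique phi : CK_dual phi -> (forall x, phi (T x) = xs x) ->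
  CK_dual_norm phi = dual_norm_linf xs ->
  forall g, continuous g -> phi g = xs (fun i => g (p i)).
Proof.
move=> phi_dual phiT phi_norm g cg; set y := fun i => g (p i).
have cTy : continuous (T y) by exact: continuous_peak_embedding.
have vanish : phi (fun k => g k - T y k) = 0.
  apply: (norming_dual_vanish cK _ _ phi_dual _ h_le1); first exact: continuous_peak_embedding.
  - by rewrite phiT xs_h phi_norm.
  - exact: continuous_sub.
  move=> k /(peak_embedding_peak _ _ (linf_norm_sign_vec xs))[i ->].
  by rewrite peak_embedding_p subrr.
have gE : g = fun k => (g k - T y k) + T y k by apply/funext => k; rewrite subrK.
by rewrite {1}gE CK_dualD ?vanish ?add0r ?phiT //; exact: continuous_sub.
Qed.

End Extension.

Lemma peak_embedding_U : U_embedding T.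
Proof.
split=> [|xs linxs]; first exact: peak_embedding_lin_isometry.
split=> [|phi1 phi2 dual1 dual2 ext1 norm1 ext2 norm2 g cg].
  exists (fun g => xs (fun i => g (p i))); split; first exact: CK_dual_restrict.
  by split; [exact: restrict_peak_embedding | exact: peak_embedding_restrict_norm].
rewrite (peak_embedding_extension_unique _ linxs _ dual1) //.
by rewrite (peak_embedding_extension_unique _ linxs _ dual2).
Qed.

End PeakEmbedding.

Lemma U_embedding_of_Gdelta_points {R : realType} {N : nat} {K : topologicalType}
    (p : 'I_N -> K) :
  compact [set: K] -> hausdorff_space K -> injective p -> (forall i, Gdelta_point (p i)) ->
  exists T : ('I_N -> R) -> K -> R, U_embedding T.
Proof.
move=> cK hK p_inj p_Gdelta.
have [f [cf f01 f_p f_peak f_disj]] :=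
  Gdelta_peak_family (R := R) p (compact_normal hK cK) hK p_inj p_Gdelta.
by exists (peak_embedding f); exact: (peak_embedding_U cK _ _ cf f01 f_p f_peak f_disj).
Qed.

Theorem proposition6p31 (R : realType) (N : nat) (K : topologicalType) :
  (0 < N)%N -> compact [set: K] -> hausdorff_space K ->
  ((exists T : ('I_N -> R) -> (K -> R), U_embedding T) <->
   (exists p : 'I_N -> K, injective p /\ forall i, Gdelta_point (p i))).
Proof.
move=> _ cK hK; split => [[T T_U]|[p [p_inj p_Gdelta]]].
  exact: Gdelta_points_of_U_embedding cK hK T_U.
exact: U_embedding_of_Gdelta_points cK hK p_inj p_Gdelta.
Qed.
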